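(* Let $G$ be a finite group that is not of prime power order, and suppose there exists an element $x\in G$ of prime order $p$ such that the centralizer $C_G(x)$ is a $p$-group. Then the cyclic graph $\Delta(G)$ is disconnected.
   Context: For a finite group $G$, the cyclic graph $\Delta(G)$ has vertex set $G^{\#}=G\setminus\{1\}$, and distinct vertices $x,y$ are adjacent if and only if the subgroup $\langle x,y\rangle$ is cyclic. *)

From mathcomp Require Import all_boot all_fingroup all_solvable.
Set Implicit Arguments. Unset Strict Implicit. Unset Printing Implicit Defensive.
Local Open Scope group_scope.

Definition cyc_adj (gT : finGroupType) (G : {set gT}) : rel gT :=
  fun x y => [&& x \in G^#, y \in G^#, x != y & cyclic <<[set x; y]>>].

(* Delta(G) is connected: any two vertices are joined by a path in Delta(G).
   (Since cyc_adj only relates vertices, paths stay inside G^#.) *)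
Definition cyc_graph_connected (gT : finGroupType) (G : {set gT}) : Prop :=
  forall x y, x \in G^# -> y \in G^# -> connect (cyc_adj G) x y.

From mathcomp Require Import all_boot all_fingroup all_solvable.
Set Implicit Arguments. Unset Strict Implicit. Unset Printing Implicit Defensive.
Local Open Scope group_scope.

(* The vertices y in the component of x all satisfy x \in <[y]>.  Indeed, if
   x \in <[y]> and y is adjacent to z, then <<y, z>> is cyclic and contains x,
   so it centralises x and is a p-group; hence p divides #[z], and <[z]>
   contains the unique subgroup <[x]> of order p of <<y, z>>.  Since G is not
   a p-group, Cauchy's theorem gives a vertex of prime order q <> p, which
   cannot have x as a power. *)

Lemma cyc_adj_sym (gT : finGroupType) (G : {set gT}) : symmetric (cyc_adj G).
Proof.
move=> x y; rewrite /cyc_adj setUC eq_sym.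
by case: (x \in G^#); case: (y \in G^#).
Qed.

Lemma not_pgroup_prime_dvd (gT : finGroupType) (G : {group gT}) (p : nat) :
  ~~ p.-group G -> exists2 q, prime q & (q %| #|G|) && (q != p).
Proof.
rewrite /pgroup /pnat cardG_gt0 => /allPn[q].
rewrite mem_primes inE => /and3P[q_pr _ q_dvG] q_neq_p.
by exists q; rewrite // q_dvG.
Qed.

Section GeneratorComponent.

Variables (gT : finGroupType) (G : {group gT}) (x : gT) (p : nat).
Hypotheses (ox : #[x] = p) (pC : p.-group 'C_G[x]).

Lemma mem_cycle_adj y z : cyc_adj G y z -> x \in <[y]> -> x \in <[z]>.
Proof.
move=> /and4P[/setD1P[_ yG] /setD1P[ntz zG] _ cycH] xy.
set H := <<[set y; z]>> in cycH.
have yH : y \in H by rewrite mem_gen ?set21.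
have zH : z \in H by rewrite mem_gen ?set22.
have xH : x \in H by apply: subsetP xy; rewrite cycle_subG.
have sHC : H \subset 'C_G[x].
  rewrite subsetI gen_subG subUset !sub1set yG zG sub_cent1.
  exact: subsetP (cyclic_abelian cycH) x xH.
have pz : p.-group <[z]>.
  by apply: pgroupS pC; apply: subset_trans sHC; rewrite cycle_subG.
have ntzG : <[z]> != 1 by rewrite cycle_eq1.
have [_ p_dv_z _] := pgroup_pdiv pz ntzG.
by rewrite -cycle_subG -(cardSg_cyclic cycH) ?cycle_subG // -orderE ox.
Qed.

Lemma mem_cycle_connect y : connect (cyc_adj G) x y -> x \in <[y]>.
Proof.
have sym_adj := sym_connect_sym (cyc_adj_sym G).
have closed_gen : closed (cyc_adj G) [pred u | x \in <[u]>].
  by apply: intro_closed => // u v; apply: mem_cycle_adj.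
by move/(closed_connect closed_gen); rewrite !inE cycle_id.
Qed.

End GeneratorComponent.

Theorem lemma3p3 (gT : finGroupType) (G : {group gT}) :
  ~ (exists p : nat, prime p /\ p.-group G) ->
  (exists (x : gT) (p : nat),
      [/\ x \in G, prime p, #[x] = p & p.-group 'C_G[x]]) ->
  ~ cyc_graph_connected G.
Proof.
move=> not_pgroup [x [p [xG p_pr ox pC]]] connG.
have [q q_pr /andP[q_dvG q_neq_p]] : exists2 q, prime q & (q %| #|G|) && (q != p).
  by apply: not_pgroup_prime_dvd; apply/negP=> pG; apply: not_pgroup; exists p.
have [y yG oy] := Cauchy q_pr q_dvG.
have xG1 : x \in G^# by rewrite !inE -order_gt1 ox prime_gt1.
have yG1 : y \in G^# by rewrite !inE -order_gt1 oy prime_gt1.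
have := order_dvdG (mem_cycle_connect ox pC (connG x y xG1 yG1)).
by rewrite -orderE ox oy dvdn_prime2 // eq_sym (negPf q_neq_p).
Qed.
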